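(* Consider an $n$-th order strictly proper SISO system with transfer function \[ P(s)=\frac{y(s)}{u(s)}=\frac{b_1s^{n-1}+\dots+b_{n-1}s+b_n}{s^n+a_1s^{n-1}+\dots+a_{n-1}s+a_n}, \] with unknown coefficients $a_i\in[\underline a_i,\bar a_i]$ and $b_j\in[\underline b_j,\bar b_j]$ for $i,j=1,\dots,n$. Let $c_0=[1,0,\dots,0]$ and let $A_0\in\mathbb{R}^{n\times n}$ be a strictly stable matrix in observable canonical form with characteristic polynomial $s^n+\hat a_1s^{n-1}+\dots+\hat a_n$ (ones on the superdiagonal, first column $-[\hat a_1,\dots,\hat a_n]^T$, zeros elsewhere). Realize the system as $\dot x=A_0x+b_yy+b_uu$, $y=c_0x$, with $b_y=[\hat a_1-a_1,\dots,\hat a_n-a_n]^T$ and $b_u=[b_1,\dots,b_n]^T$. Let $\theta_y,\theta_u$ satisfy $\dot\theta_y=A_0^T\theta_y+c_0^Ty$, $\dot\theta_u=A_0^T\theta_u+c_0^Tu$; let $C_0$ be the observability matrix of $(c_0,A_0)$ (rows $c_0A_0^{k}$, $k=0,\dots,n-1$), $\Theta_y,\Theta_u$ the controllability matrices $[\theta,A_0^T\theta,\dots,(A_0^T)^{n-1}\theta]$ for $\theta=\theta_y,\theta_u$, and $E_y=C_0^{-1}\Theta_y^T$, $E_u=C_0^{-1}\Theta_u^T$. For parameter vectors define $\hat x(b_y,b_u)=E_yb_y+E_ub_u$, and let $\hat x(b_{yi},b_{ui})$, $i=1,\dots,N$, be all the vertices of the convex hull of the points $E_y[\hat a_1-a_1,\dots,\hat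 a_n-a_n]^T+E_u[b_1,\dots,b_n]^T$ with $a_i\in\{\underline a_i,\bar a_i\}$, $b_j\in\{\underline b_j,\bar b_j\}$. Let $\epsilon_0=x(0)-\hat x(0)$, where $\hat x$ is evaluated at the true coefficients. Let $Q\succ0$ and $\|x\|_q=(x^TQ^{-1}x)^{1/2}$. If \[ A_0Q+QA_0^T+2\alpha Q\preceq 0, \] then for every $t\ge0$ there exists $i\in\{1,\dots,N\}$ such that \[ \|x(t)\|_q\le\|\hat x(b_{yi},b_{ui})(t)\|_q+e^{-\alpha t}\|\epsilon_0\|_q . \]
   Context: $\hat x(b_{yi},b_{ui})(t)$ denotes $E_y(t)b_{yi}+E_u(t)b_{ui}$, computable from the measured $u,y$ through the filters. *)

From HB Require Import structures.
From mathcomp Require Import all_boot all_order all_algebra.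
From mathcomp Require Import all_classical all_reals all_analysis.
From mathcomp Require Import complex.
Set Implicit Arguments. Unset Strict Implicit. Unset Printing Implicit Defensive.
Import Order.TTheory GRing.Theory Num.Theory.
Import numFieldNormedType.Exports.
Local Open Scope ring_scope.
Local Open Scope classical_set_scope.

Section Defs.
Variables (R : realType) (n : nat).

(* c0 = [1, 0, ..., 0] (a row vector); needs n > 0 to be meaningful. *)
Definition c0 : 'rV[R]_n := \row_(j < n) (if (j : nat) == 0%N then 1 else 0).

(* Observable canonical form with characteristic polynomial
   s^n + ahat_1 s^(n-1) + ... + ahat_n  (index k : 'I_n stands for ahat_(k+1)):
   first column -ahat, ones on the superdiagonal, zeros elsewhere. *)
Definition A0 (ahat : 'cV[R]_n) : 'M[R]_n :=
  \matrix_(i < n, j < n)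
    (if (j : nat) == 0%N then - ahat i 0
     else if (j : nat) == i.+1 then 1 else 0).

Definition strictly_stable (A : 'M[R]_n) : Prop :=
  forall z : R[i], root (map_poly (fun r : R => (r%:C)%C) (char_poly A)) z ->
    complex.Re z < 0.

Definition obsv_mx (c : 'rV[R]_n) (A : 'M[R]_n) : 'M[R]_n :=
  \matrix_(k < n, j < n) (c *m A ^+ k) 0 j.

Definition ctrb_mx (A : 'M[R]_n) (th : 'cV[R]_n) : 'M[R]_n :=
  \matrix_(i < n, k < n) ((A^T) ^+ k *m th) i 0.

Definition Emx (ahat : 'cV[R]_n) (th : 'cV[R]_n) : 'M[R]_n :=
  invmx (obsv_mx c0 (A0 ahat)) *m (ctrb_mx (A0 ahat) th)^T.

Definition xhat (ahat thy thu by_ bu : 'cV[R]_n) : 'cV[R]_n :=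
  Emx ahat thy *m by_ + Emx ahat thu *m bu.

Definition posdef (Q : 'M[R]_n) : Prop :=
  Q^T = Q /\ forall v : 'cV[R]_n, v != 0 -> 0 < (v^T *m Q *m v) 0 0.

Definition negsemidef (M : 'M[R]_n) : Prop :=
  M^T = M /\ forall v : 'cV[R]_n, (v^T *m M *m v) 0 0 <= 0.

Definition qnorm (Q : 'M[R]_n) (v : 'cV[R]_n) : R :=
  Num.sqrt ((v^T *m invmx Q *m v) 0 0).

Definition conv_hull (S : set 'cV[R]_n) : set 'cV[R]_n :=
  [set p | exists (m : nat) (w : 'I_m -> R) (v : 'I_m -> 'cV[R]_n),
     (forall k, 0 <= w k) /\ \sum_(k < m) w k = 1 /\ (forall k, S (v k)) /\
     p = \sum_(k < m) w k *: v k].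

Definition vertex_of (C : set 'cV[R]_n) (p : 'cV[R]_n) : Prop :=
  C p /\ forall (u v : 'cV[R]_n) (l : R), C u -> C v -> 0 < l < 1 ->
    p = l *: u + (1 - l) *: v -> u = p /\ v = p.

Definition corner_points (ahat thy thu alo ahi blo bhi : 'cV[R]_n)
  : set 'cV[R]_n :=
  [set p | exists a b : 'cV[R]_n,
     (forall i, a i 0 = alo i 0 \/ a i 0 = ahi i 0) /\
     (forall j, b j 0 = blo j 0 \/ b j 0 = bhi j 0) /\
     p = xhat ahat thy thu (ahat - a) b].

End Defs.

From HB Require Import structures.
From mathcomp Require Import all_boot all_order all_algebra.
From mathcomp Require Import all_classical all_reals all_analysis.
From mathcomp Require Import complex.
From mathcomp Require Import ring lra.
Set Implicit Arguments. Unset Strict Implicit. Unset Printing Implicit Defensive.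
Import Order.TTheory GRing.Theory Num.Theory.
Import numFieldNormedType.Exports.
Local Open Scope ring_scope.
Local Open Scope classical_set_scope.

(* Both the observability matrix C0 of (c0, A0) and the matrix K(v) with
   rows v^T (A0^T)^k intertwine with the companion matrix F of the
   characteristic polynomial of A0, by Cayley-Hamilton: C0 A0 = F C0 and
   K(v) A0^T = F K(v).  Hence G(v) = C0^-1 K(v) satisfies E(theta) v =
   G(v) theta, G(v) A0^T = A0 G(v) and G(v) c0^T = v, so the error
   eps = x - xhat(b_y, b_u) at the true parameters obeys eps' = A0 eps.
   With P = Q^-1, the LMI makes e^(2 alpha t) eps^T P eps nonincreasing,
   whence |eps(t)|_q <= e^(-alpha t) |eps(0)|_q.  Finally xhat is affine in
   the parameters, so by convexity of |.|_q its norm on the parameter box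
   is largest at a corner, and a corner of largest norm is a vertex of the
   hull because the |.|_q ball is strictly convex. *)

Section MxForm.
Variables (R : realType) (n : nat) (P : 'M[R]_n).

Definition mxform (u v : 'cV[R]_n) : R := (u^T *m P *m v) 0 0.
Definition mxnorm (v : 'cV[R]_n) : R := Num.sqrt (mxform v v).

Lemma mxformDl u v w : mxform (u + v) w = mxform u w + mxform v w.
Proof. by rewrite /mxform linearD /= !mulmxDl mxE. Qed.

Lemma mxformDr u v w : mxform w (u + v) = mxform w u + mxform w v.
Proof. by rewrite /mxform !mulmxDr mxE. Qed.

Lemma mxformZl c u w : mxform (c *: u) w = c * mxform u w.
Proof. by rewrite /mxform linearZ /= -!scalemxAl mxE. Qed.

Lemma mxformZr c u w : mxform w (c *: u) = c * mxform w u.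
Proof. by rewrite /mxform -!scalemxAr mxE. Qed.

Lemma mxformNl u w : mxform (- u) w = - mxform u w.
Proof. by rewrite -scaleN1r mxformZl mulN1r. Qed.

Lemma mxformNr u w : mxform w (- u) = - mxform w u.
Proof. by rewrite -scaleN1r mxformZr mulN1r. Qed.

Lemma mxform0l w : mxform 0 w = 0.
Proof. by rewrite /mxform linear0 !mul0mx mxE. Qed.

Lemma mxform_sumE u v : mxform u v = \sum_(i < n) u i 0 * (P *m v) i 0.
Proof. by rewrite /mxform -mulmxA mxE; apply: eq_bigr => i _; rewrite mxE. Qed.

Hypotheses (Psym : P^T = P)
  (Ppos : forall v : 'cV[R]_n, v != 0 -> 0 < (v^T *m P *m v) 0 0).

Lemma mxformC u v : mxform u v = mxform v u.
Proof.
rewrite /mxform -[u^T *m P *m v]trmxK [in LHS]mxE.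
by rewrite !trmx_mul trmxK Psym mulmxA.
Qed.

Lemma mxform_ge0 v : 0 <= mxform v v.
Proof. by have [->|/Ppos/ltW//] := eqVneq v 0; rewrite mxform0l. Qed.

Lemma mxform_eq0 v : mxform v v = 0 -> v = 0.
Proof. by have [//|/Ppos/gt_eqF/eqP] := eqVneq v 0. Qed.

Lemma mxnorm_ge0 v : 0 <= mxnorm v.
Proof. exact: sqrtr_ge0. Qed.

Lemma sqr_mxnorm v : mxnorm v ^+ 2 = mxform v v.
Proof. by rewrite sqr_sqrtr // mxform_ge0. Qed.

Lemma mxnorm0 : mxnorm 0 = 0.
Proof. by rewrite /mxnorm mxform0l sqrtr0. Qed.

Lemma mxnormZ c v : mxnorm (c *: v) = `|c| * mxnorm v.
Proof.
by rewrite /mxnorm mxformZl mxformZr mulrA -expr2 sqrtrM ?sqr_ge0 // sqrtr_sqr.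
Qed.

Lemma mxform_Cauchy_Schwarz u v : mxform u v ^+ 2 <= mxform u u * mxform v v.
Proof.
have [->|/Ppos vv_gt0] := eqVneq v 0.
  by rewrite mxformC !mxform0l expr2 !mul0r mulr0.
rewrite -/(mxform v v) in vv_gt0.
have := mxform_ge0 (mxform v v *: u - mxform u v *: v).
rewrite mxformDl !mxformDr !mxformNl !mxformNr !mxformZl !mxformZr (mxformC v u).
move=> combination_ge0.
have : 0 <= mxform v v * (mxform v v * mxform u u - mxform u v ^+ 2) by nra.
by rewrite pmulr_rge0 // subr_ge0 mulrC.
Qed.

Lemma mxform_le_mxnorm u v : mxform u v <= mxnorm u * mxnorm v.
Proof.
apply: le_trans (ler_norm _) _.
rewrite -sqrtr_sqr -[mxnorm u * _]ger0_norm ?mulr_ge0 ?mxnorm_ge0 // -sqrtr_sqr.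
by rewrite ler_sqrt ?sqr_ge0 // exprMn !sqr_mxnorm mxform_Cauchy_Schwarz.
Qed.

Lemma mxnormD u v : mxnorm (u + v) <= mxnorm u + mxnorm v.
Proof.
rewrite -[mxnorm u + _]ger0_norm ?addr_ge0 ?mxnorm_ge0 // -sqrtr_sqr ler_sqrt ?sqr_ge0 //.
rewrite mxformDl !mxformDr (mxformC v u) -!sqr_mxnorm.
have := mxform_le_mxnorm u v; nra.
Qed.

Lemma mxnorm_sum m (w : 'I_m -> R) (v : 'I_m -> 'cV[R]_n) :
  (forall k, 0 <= w k) ->
  mxnorm (\sum_(k < m) w k *: v k) <= \sum_(k < m) w k * mxnorm (v k).
Proof.
move=> w_ge0; apply: (big_ind2 (fun x y => mxnorm x <= y)).
- by rewrite mxnorm0.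
- by move=> x1 y1 x2 y2 h1 h2; apply: le_trans (mxnormD _ _) (lerD h1 h2).
- by move=> k _; rewrite mxnormZ ger0_norm.
Qed.

Lemma mxform_convex_comb l u v :
  mxform (l *: u + (1 - l) *: v) (l *: u + (1 - l) *: v) =
  l * mxform u u + (1 - l) * mxform v v - l * (1 - l) * mxform (u - v) (u - v).
Proof.
by rewrite !mxformDl !mxformDr !mxformNl !mxformNr !mxformZl !mxformZr (mxformC v u); ring.
Qed.

End MxForm.

Section MxNormConvexity.
Variables (R : realType) (n : nat) (P : 'M[R]_n).
Hypotheses (Psym : P^T = P)
  (Ppos : forall v : 'cV[R]_n, v != 0 -> 0 < (v^T *m P *m v) 0 0).
Local Notation N := (mxnorm P).

Lemma mxnorm_conv_hull_le (S : set 'cV[R]_n) (M : R) p :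
  (forall c, S c -> N c <= M) -> conv_hull S p -> N p <= M.
Proof.
move=> le_SM [m [w [v [w_ge0 [w_sum1 [Sv ->]]]]]].
apply: le_trans (mxnorm_sum Psym Ppos _ w_ge0) _.
rewrite -[M in _ <= M]mul1r -w_sum1 mulr_suml.
by apply: ler_sum => k _; apply: ler_wpM2l => //; apply: le_SM.
Qed.

(* The norm ball is strictly convex, so a point of maximal norm cannot lie
   strictly inside a segment of the hull. *)
Lemma vertex_of_mxnorm_max (S : set 'cV[R]_n) p :
  S p -> (forall c, S c -> N c <= N p) -> vertex_of (conv_hull S) p.
Proof.
move=> Sp le_Sp; split.
  exists 1%N, (fun=> 1), (fun=> p).
  by do !split; rewrite /= ?big_ord1 ?scale1r.
move=> u v l hull_u hull_v /andP[l_gt0 l_lt1] pE.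
have le_hull_p c : conv_hull S c -> mxform P c c <= mxform P p p.
  move=> /(mxnorm_conv_hull_le le_Sp) le_cp.
  by rewrite -!(sqr_mxnorm Ppos) ler_sqr ?nnegrE ?mxnorm_ge0.
have l1l_gt0 : 0 < l * (1 - l) by rewrite mulr_gt0 // subr_gt0.
have uv0 : mxform P (u - v) (u - v) = 0.
  apply/eqP; rewrite eq_le mxform_ge0 // andbT -(pmulr_rle0 _ l1l_gt0).
  have := mxform_convex_comb Psym l u v; rewrite -pE.
  have := le_hull_p u hull_u; have := le_hull_p v hull_v; nra.
have /eqP := mxform_eq0 Ppos uv0; rewrite subr_eq0 => /eqP uv.
have pu : p = u by rewrite pE uv -scalerDl addrC subrK scale1r.
by rewrite -pu -uv -pu.
Qed.

Lemma mxnorm_segment_endpoint (p d : 'cV[R]_n) (lo hi s : R) :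
  lo <= s <= hi ->
  exists2 s', s' = lo \/ s' = hi & N (p + s *: d) <= N (p + s' *: d).
Proof.
move=> /andP[lo_s s_hi].
have [lo_hi|lo_hi] := eqVneq lo hi.
  have -> : s = lo by apply/eqP; rewrite eq_le lo_s andbT lo_hi.
  by exists lo; [left |].
have hilo_gt0 : 0 < hi - lo by rewrite subr_gt0 lt_neqAle lo_hi (le_trans lo_s s_hi).
pose l := (hi - s) / (hi - lo).
have l_ge0 : 0 <= l by apply: divr_ge0; [rewrite subr_ge0 | exact: ltW].
have l_le1 : 0 <= 1 - l by rewrite subr_ge0 ler_pdivrMr // mul1r lerD2l lerN2.
have sE : s = l * lo + (1 - l) * hi by rewrite /l; field; rewrite subr_eq0 eq_sym.
have -> : p + s *: d = l *: (p + lo *: d) + (1 - l) *: (p + hi *: d).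
  rewrite !scalerDr !scalerA sE scalerDl addrACA -!scalerDl.
  by rewrite [l + _]addrC subrK scale1r.
have := mxnormD Psym Ppos (l *: (p + lo *: d)) ((1 - l) *: (p + hi *: d)).
rewrite !mxnormZ !ger0_norm // => le_comb.
have [le_lo_hi|lt_hi_lo] := leP (N (p + lo *: d)) (N (p + hi *: d)).
- by exists hi; [right | nra].
- by exists lo; [left | nra].
Qed.

Section Box.
Variables (k : nat) (p0 : 'cV[R]_n) (M : 'M[R]_(n, k)) (lo hi : 'cV[R]_k).

Definition in_box (z : 'cV[R]_k) := forall i, lo i 0 <= z i 0 <= hi i 0.
Definition at_endpoint (z : 'cV[R]_k) i := z i 0 = lo i 0 \/ z i 0 = hi i 0.

Lemma mxnorm_box_push_coord z j : in_box z ->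
  exists z', [/\ in_box z', at_endpoint z' j,
    forall i, i != j -> z' i 0 = z i 0 & N (p0 + M *m z) <= N (p0 + M *m z')].
Proof.
move=> z_box.
pose e : 'cV[R]_k := delta_mx j 0.
pose zs s := z + (s - z j 0) *: e.
have zsE s i : zs s i 0 = if i == j then s else z i 0.
  rewrite !mxE eqxx andbT; case: eqP => [->|_]; last by rewrite mulr0 addr0.
  by rewrite mulr1 addrC subrK.
have Mzs s : p0 + M *m zs s = (p0 + M *m z - z j 0 *: (M *m e)) + s *: (M *m e).
  by rewrite mulmxDr -scalemxAr scalerBl !addrA [RHS]addrAC.
have [s' s'_end le_s'] :=
  mxnorm_segment_endpoint (p0 + M *m z - z j 0 *: (M *m e)) (M *m e) (z_box j).
exists (zs s'); split.
- have /andP[lo_z z_hi] := z_box j.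
  move=> i; rewrite zsE; case: eqP => [->|_]; last exact: z_box.
  by case: s'_end => ->; rewrite lexx ?(le_trans lo_z z_hi).
- by rewrite /at_endpoint zsE eqxx.
- by move=> i /negbTE; rewrite zsE => ->.
- by move: le_s'; rewrite -!Mzs /zs subrr scale0r addr0.
Qed.

Lemma mxnorm_box_corner z : in_box z ->
  exists z', (forall i, at_endpoint z' i) /\ N (p0 + M *m z) <= N (p0 + M *m z').
Proof.
move=> z_box.
suff /(_ k) [z' [_ z'_end le_z']] : forall j, exists z', [/\ in_box z',
    forall i : 'I_k, (i < j)%N -> at_endpoint z' i &
    N (p0 + M *m z) <= N (p0 + M *m z')].
  by exists z'; split => // i; apply: z'_end.
elim=> [|j [z' [z'_box z'_end le_z']]]; first by exists z.
have [jk|kj] := ltnP j k; last first.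
  by exists z'; split => // i _; apply/z'_end/(leq_trans (ltn_ord i) kj).
have [z'' [z''_box z''_j z''_eq le_z'']] :=
  mxnorm_box_push_coord (Ordinal jk) z'_box.
exists z''; split => //; last exact: le_trans le_z' le_z''.
move=> i i_le_j; have [->//|i_ne_j] := eqVneq i (Ordinal jk).
rewrite /at_endpoint z''_eq //; apply: z'_end.
have i_ne_j' : (i : nat) != j by apply: contraNneq i_ne_j => ij; apply/eqP/val_inj.
by rewrite ltn_neqAle i_ne_j' -ltnS.
Qed.

End Box.

End MxNormConvexity.

Section ObservabilityShift.
Variables (R : realType) (n : nat).
Implicit Types (A : 'M[R]_n) (c d : 'rV[R]_n).

Lemma trmxX A k : (A ^+ k)^T = A^T ^+ k.
Proof.
elim: k => [|k IHk]; first by rewrite !expr0 trmx1.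
by rewrite exprS -mulmxE trmx_mul IHk mulmxE -exprSr.
Qed.

Lemma char_poly_trmx A : char_poly A^T = char_poly A.
Proof.
rewrite /char_poly -det_tr; congr (\det _).
by apply/matrixP => i j; rewrite !mxE eq_sym.
Qed.

Lemma Cayley_Hamilton_exp A : A ^+ n = - \sum_(i < n) (char_poly A)`_i *: A ^+ i.
Proof.
case: n A => [|n'] A; first by rewrite [LHS]flatmx0 [RHS]flatmx0.
have coef_n : (char_poly A)`_n'.+1 = 1.
  by have /monicP := char_poly_monic A; rewrite lead_coefE size_char_poly.
have := Cayley_Hamilton A.
rewrite -{1}[char_poly A]coefK poly_def rmorph_sum size_char_poly big_ord_recr /=.
rewrite coef_n scale1r.
under eq_bigr do rewrite horner_mxZ rmorphXn /= horner_mx_X.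
by rewrite rmorphXn /= horner_mx_X => /eqP; rewrite addrC addr_eq0 => /eqP.
Qed.

Definition companion_mx A : 'M[R]_n := \matrix_(k < n, j < n)
  (if (k.+1 < n)%N then ((j : nat) == k.+1)%:R else - (char_poly A)`_j).

Lemma companion_mx_trmx A : companion_mx A^T = companion_mx A.
Proof. by rewrite /companion_mx char_poly_trmx. Qed.

Lemma row_obsv_mx c A k : row k (obsv_mx c A) = c *m A ^+ k.
Proof. by apply/rowP => j; rewrite !mxE. Qed.

Lemma obsv_mx_shift c A : obsv_mx c A *m A = companion_mx A *m obsv_mx c A.
Proof.
apply/row_matrixP => k; rewrite !row_mul row_obsv_mx -mulmxA mulmxE -exprSr.
rewrite [RHS]mulmx_sum_row; under eq_bigr do rewrite row_obsv_mx !mxE.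
have [lt_k1n|] := ltnP k.+1 n.
  rewrite (bigD1 (Ordinal lt_k1n)) //= eqxx scale1r big1 ?addr0 // => l l_neq.
  rewrite (_ : (l : nat) == k.+1 = false) ?scale0r //.
  by apply: contraNF l_neq => /eqP l_k1; apply/eqP/val_inj.
move=> le_n_k1; have -> : k.+1 = n by apply/eqP; rewrite eqn_leq le_n_k1 ltn_ord.
rewrite Cayley_Hamilton_exp mulmxN mulmx_sumr -sumrN.
by apply: eq_bigr => l _; rewrite -scalemxAr scaleNr.
Qed.

Lemma obsv_mx_trmx_swap c d A : obsv_mx c A *m d^T = obsv_mx d A^T *m c^T.
Proof.
apply/row_matrixP => k; rewrite !row_mul !row_obsv_mx -trmxX.
have -> : d *m (A ^+ k)^T *m c^T = (c *m A ^+ k *m d^T)^T.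
  by rewrite !trmx_mul trmxK mulmxA.
by apply/matrixP => i j; rewrite !ord1 [RHS]mxE.
Qed.

Lemma trmx_ctrb_mx A th : (ctrb_mx A th)^T = obsv_mx th^T A.
Proof.
apply/matrixP => k j; rewrite [LHS]mxE [in LHS]mxE [RHS]mxE -trmxX.
by rewrite -[th^T *m _]trmxK [in RHS]mxE trmx_mul trmxK.
Qed.

End ObservabilityShift.

Section ObservableCanonicalForm.
Variables (R : realType) (n : nat) (ahat : 'cV[R]_n).
Local Notation A := (A0 ahat).
Local Notation C0 := (obsv_mx (c0 R n) A).

Lemma c0_A0_exp k (j : 'I_n) : (k <= j)%N ->
  (c0 R n *m A ^+ k) 0 j = ((j : nat) == k)%:R.
Proof.
elim: k j => [|k IHk] j le_kj; first by rewrite expr0 mulmx1 !mxE; case: eqP.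
have j_gt0 : (0 < j)%N by apply: leq_trans le_kj.
have lt_j1n : (j.-1 < n)%N by rewrite (leq_ltn_trans (leq_pred _)).
have j_neq0 : ((j : nat) == 0%N) = false by rewrite eqn0Ngt j_gt0.
rewrite exprSr -mulmxE mulmxA mxE (bigD1 (Ordinal lt_j1n)) //.
rewrite big1 ?Monoid.mulm1.
  rewrite IHk; last by rewrite /= -ltnS prednK.
  rewrite mxE j_neq0 [nat_of_ord (Ordinal _)]/= prednK // eqxx mulr1.
  by rewrite -eqSS prednK.
move=> i /andP[_ i_neq]; rewrite [A i j]mxE j_neq0.
case: eqP => [j_i1|_]; last by rewrite mulr0.
by case/eqP: i_neq; apply: val_inj; rewrite /= j_i1.
Qed.

Lemma obsv_mx_c0_unit : C0 \in unitmx.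
Proof.
rewrite unitmxE (det_trig (A := C0)).
  by rewrite big1 ?unitr1 // => i _; rewrite mxE c0_A0_exp // eqxx.
by apply/is_trig_mxP => i j lt_ij; rewrite mxE c0_A0_exp ?(ltnW lt_ij) // gtn_eqF.
Qed.

Definition swap_mx (v : 'cV[R]_n) : 'M[R]_n := invmx C0 *m obsv_mx v^T A^T.

Lemma Emx_mulmx v th : Emx ahat th *m v = swap_mx v *m th.
Proof.
have := obsv_mx_trmx_swap th^T v^T A; rewrite !trmxK => swap_th_v.
by rewrite /Emx /swap_mx trmx_ctrb_mx -mulmxA swap_th_v mulmxA.
Qed.

Lemma swap_mx_A0 v : swap_mx v *m A^T = A *m swap_mx v.
Proof.
have C0_A : invmx C0 *m companion_mx A = A *m invmx C0.
  rewrite -[LHS]mulmx1 -(mulmxV obsv_mx_c0_unit) !mulmxA -[_ *m _ *m C0]mulmxA.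
  by rewrite -obsv_mx_shift mulmxA mulVmx ?obsv_mx_c0_unit // mul1mx.
by rewrite /swap_mx -mulmxA obsv_mx_shift companion_mx_trmx mulmxA C0_A mulmxA.
Qed.

Lemma swap_mx_c0 v : swap_mx v *m (c0 R n)^T = v.
Proof.
rewrite /swap_mx -mulmxA obsv_mx_trmx_swap trmxK trmxK.
by rewrite mulmxA mulVmx ?obsv_mx_c0_unit // mul1mx.
Qed.

End ObservableCanonicalForm.

Section MatrixCalculus.
Variable R : realType.

Lemma is_derive_mxP m k (f : R -> 'M[R]_(m, k)) (t : R) (df : 'M[R]_(m, k)) :
  is_derive t 1 f df <-> forall i j, is_derive t 1 (fun s => f s i j) (df i j).
Proof.
split => [f_df i j|f_df].
  have f_der : derivable f t 1 := @ex_derive _ _ _ _ _ _ _ f_df.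
  apply: DeriveDef; first exact: (derivable_mxP f t 1).1 f_der i j.
  by have := derive_mx f_der; rewrite (@derive_val _ _ _ _ _ _ _ f_df) => ->; rewrite mxE.
have f_der : derivable f t 1.
  by apply/derivable_mxP => i j; exact: @ex_derive _ _ _ _ _ _ _ (f_df i j).
apply: DeriveDef => //; rewrite derive_mx //; apply/matrixP => i j.
by rewrite mxE (@derive_val _ _ _ _ _ _ _ (f_df i j)).
Qed.

Lemma is_derive_mulmx m p k (M : 'M[R]_(m, p)) (f : R -> 'M[R]_(p, k))
    (df : 'M[R]_(p, k)) (t : R) :
  is_derive t 1 f df -> is_derive t 1 (fun s => M *m f s) (M *m df).
Proof.
move=> /is_derive_mxP f_df; apply/is_derive_mxP => i j; rewrite mxE.
under [fun s => _]funext do rewrite mxE.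
by rewrite -fct_sumE; apply: is_derive_sum => l; apply: is_deriveZ.
Qed.

Lemma is_derive_mxform n (P : 'M[R]_n) (f : R -> 'cV[R]_n) (df : 'cV[R]_n) (t : R) :
  is_derive t 1 f df ->
  is_derive t 1 (fun s => mxform P (f s) (f s))
    (mxform P df (f t) + mxform P (f t) df).
Proof.
move=> f_df; have /is_derive_mxP Pf_df := is_derive_mulmx P f_df.
move/is_derive_mxP : f_df => f_df.
under [fun s => _]funext do rewrite mxform_sumE.
rewrite !mxform_sumE -big_split -fct_sumE; apply: is_derive_sum => i /=.
apply: (is_derive_eq (is_deriveM (f_df i 0) (Pf_df i 0))).
by rewrite /GRing.scale /= addrC [(P *m f t) i 0 * _]mulrC.
Qed.

End MatrixCalculus.

Section MatrixContinuity.
Variables (R : realType) (T : topologicalType).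

Lemma continuous_big_sum (V : normedModType R) m (f : 'I_m -> T -> V) :
  (forall i, continuous (f i)) -> continuous (fun s => \sum_(i < m) f i s).
Proof.
move=> f_cont; rewrite -fct_sumE.
apply: (big_ind (fun g : T -> V => continuous g)) => //.
- by move=> s; apply: cvg_cst.
- by move=> g h g_cont h_cont s; exact: (continuousD (g_cont s) (h_cont s)).
Qed.

Lemma continuous_mx_coord m k (f : T -> 'M[R]_(m, k)) i j :
  continuous f -> continuous (fun s => f s i j).
Proof.
move=> f_cont s; apply: (@continuous_comp _ _ _ f (fun M : 'M[R]_(m, k) => M i j)).
  exact: f_cont.
exact: coord_continuous.
Qed.

Lemma continuous_mulmx m p k (M : 'M[R]_(m, p)) (f : T -> 'M[R]_(p, k)) :
  continuous f -> continuous (fun s => M *m f s).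
Proof.
move=> f_cont.
have -> : (fun s => M *m f s) =
    (fun s => \sum_(i < p) \sum_(j < k) f s i j *: (M *m delta_mx i j)).
  apply/funext => s; rewrite {1}[f s]matrix_sum_delta mulmx_sumr.
  apply: eq_bigr => i _; rewrite mulmx_sumr.
  by apply: eq_bigr => j _; rewrite scalemxAr.
apply: continuous_big_sum => i; apply: continuous_big_sum => j s.
exact/continuousZr_tmp/continuous_mx_coord.
Qed.

Lemma continuous_mxform n (P : 'M[R]_n) (f : T -> 'cV[R]_n) :
  continuous f -> continuous (fun s => mxform P (f s) (f s)).
Proof.
move=> f_cont; under [fun s => _]funext do rewrite mxform_sumE.
apply: continuous_big_sum => i s; apply: continuousM.
  exact: continuous_mx_coord.
exact/continuous_mx_coord/continuous_mulmx.
Qed.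

End MatrixContinuity.

Lemma is_derive_expR_scale (R : realType) (c s : R) :
  is_derive s 1 (fun r => expR (c * r)) (expR (c * s) * c).
Proof.
have lin_der : is_derive s 1 (fun r : R => c * r) c.
  apply: is_derive_eq (is_deriveZ c (is_derive_id s 1)) _.
  by rewrite /GRing.scale /= mulr1.
exact: is_derive1_comp (is_derive_expR (c * s)) lin_der.
Qed.

Section LyapunovDecay.
Variables (R : realType) (n : nat) (P A : 'M[R]_n) (alpha : R).
Hypothesis lyap : forall v : 'cV[R]_n,
  mxform P (A *m v) v + mxform P v (A *m v) + 2 * alpha * mxform P v v <= 0.

Lemma mxform_exp_decay (f : R -> 'cV[R]_n) :
  {within `[0, +oo[, continuous f} ->
  (forall t : R, 0 < t -> is_derive t 1 f (A *m f t)) ->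
  forall t : R, 0 <= t ->
    mxform P (f t) (f t) <= expR (- (2 * alpha) * t) * mxform P (f 0) (f 0).
Proof.
move=> f_cont f_der t t_ge0.
pose q s := mxform P (f s) (f s).
pose V s := expR (2 * alpha * s) * q s.
have V_der (s : R) : 0 < s -> is_derive s 1 V (expR (2 * alpha * s) *
    (mxform P (A *m f s) (f s) + mxform P (f s) (A *m f s) + 2 * alpha * q s)).
  move=> s_gt0.
  apply: is_derive_eq
    (is_deriveM (is_derive_expR_scale _ s) (is_derive_mxform P (f_der s s_gt0))) _.
  by rewrite /GRing.scale /= /q; ring.
have q_cont : {within `[0, +oo[, continuous q} := continuous_mxform (P := P) f_cont.
have exp_cont : continuous (fun s : R => expR (2 * alpha * s)).
  move=> s; apply: (@continuous_comp _ _ _ ( *%R (2 * alpha)) expR).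
    exact: mulrl_continuous.
  exact: continuous_expR.
have V_cont : {within `[0, +oo[, continuous V}.
  by move=> s; apply: (continuousM _ (q_cont s)); apply: continuous_subspaceT.
have V_t_le : V t <= V 0.
  have [->|t_neq0] := eqVneq t 0; first exact: lexx.
  have t_gt0 : 0 < t by rewrite lt_neqAle eq_sym t_neq0.
  apply: (@ler0_derive1_le_cc R V 0 t) => //.
  - move=> r; rewrite in_itv /= => /andP[r_gt0 _].
    exact: @ex_derive _ _ _ _ _ _ _ (V_der r r_gt0).
  - move=> r; rewrite in_itv /= => /andP[r_gt0 _].
    rewrite derive1E (@derive_val _ _ _ _ _ _ _ (V_der r r_gt0)).
    by rewrite pmulr_rle0 ?expR_gt0.
  - by apply: continuous_subspaceW V_cont; apply: subset_itvl.
  - by rewrite in_itv /= lexx t_ge0.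
  - by rewrite in_itv /= lexx t_ge0.
have q_t : q t = expR (- (2 * alpha) * t) * V t.
  by rewrite mulrA -expRD mulNr addNr expR0 mul1r.
rewrite -/(q t) -/(q 0) q_t; apply: ler_wpM2l; first exact: expR_ge0.
by apply: le_trans V_t_le _; rewrite /V mulr0 expR0 mul1r.
Qed.

Lemma mxnorm_exp_decay (f : R -> 'cV[R]_n) :
  {within `[0, +oo[, continuous f} ->
  (forall t : R, 0 < t -> is_derive t 1 f (A *m f t)) ->
  forall t : R, 0 <= t -> mxnorm P (f t) <= expR (- alpha * t) * mxnorm P (f 0).
Proof.
move=> f_cont f_der t t_ge0.
have exp2 : expR (- (2 * alpha) * t) = expR (- alpha * t) ^+ 2.
  by rewrite -expRM_natl; congr expR; ring.
rewrite /mxnorm -[expR _]ger0_norm ?expR_ge0 // -sqrtr_sqr -sqrtrM ?sqr_ge0 // -exp2.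
exact/ler_wsqrtr/mxform_exp_decay.
Qed.

End LyapunovDecay.

Section PositiveDefinite.
Variables (R : realType) (n : nat) (Q : 'M[R]_n).
Hypothesis Qpd : posdef Q.

Lemma posdef_unitmx : Q \in unitmx.
Proof.
have [_ Qpos] := Qpd.
rewrite unitmxE unitfE; apply/negP => /det0P[v v_neq0 vQ].
have := Qpos v^T; rewrite trmx_eq0 trmxK vQ mul0mx mxE ltxx.
by move/(_ v_neq0).
Qed.

Lemma posdef_invmx : posdef (invmx Q).
Proof.
have [Qsym Qpos] := Qpd; have Qunit := posdef_unitmx.
have Psym : (invmx Q)^T = invmx Q by rewrite trmx_inv Qsym.
split=> // v v_neq0.
have Pv_neq0 : invmx Q *m v != 0.
  apply: contraNneq v_neq0 => Pv0.
  by rewrite -[v]mul1mx -(mulmxV Qunit) -mulmxA Pv0 mulmx0.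
have QP : Q *m (invmx Q *m v) = v by rewrite mulmxA mulmxV // mul1mx.
by have := Qpos _ Pv_neq0; rewrite trmx_mul Psym -mulmxA QP.
Qed.

(* The LMI for [Q] is the Lyapunov inequality for [Q^-1], read at [Q^-1 v]. *)
Lemma lyapunov_invmx (A : 'M[R]_n) (alpha : R) :
  negsemidef (A *m Q + Q *m A^T + (2 * alpha) *: Q) ->
  forall v, mxform (invmx Q) (A *m v) v + mxform (invmx Q) v (A *m v)
            + 2 * alpha * mxform (invmx Q) v v <= 0.
Proof.
move=> [_ LMI] v; have [Qsym _] := Qpd; have Qunit := posdef_unitmx.
have [Psym _] := posdef_invmx.
have QP : Q *m (invmx Q *m v) = v by rewrite mulmxA mulmxV // mul1mx.
have := LMI (invmx Q *m v).
rewrite !mulmxDr !mulmxDl -!mulmxA QP -scalemxAl -scalemxAr QP.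
have PQ w : invmx Q *m (Q *m w) = w by rewrite mulmxA mulVmx // mul1mx.
have entryE (X Y Z : 'M[R]_1) c :
  (X + Y + c *: Z) 0 0 = X 0 0 + Y 0 0 + c * Z 0 0 by rewrite !mxE.
rewrite trmx_mul Psym -!mulmxA PQ entryE /mxform trmx_mul !mulmxA.
by rewrite [X in X + _ <= 0 -> _]addrC.
Qed.

End PositiveDefinite.

Section FilterError.
Variables (R : realType) (n : nat) (ahat by_ bu : 'cV[R]_n).
Variables (x thy thu : R -> 'cV[R]_n) (u y : R -> R).
Local Notation A := (A0 ahat).
Local Notation c := (c0 R n).

Definition filter_error (s : R) : 'cV[R]_n :=
  x s - xhat ahat (thy s) (thu s) by_ bu.

Lemma filter_errorE : filter_error =
  (fun s => x s - (swap_mx ahat by_ *m thy s + swap_mx ahat bu *m thu s)).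
Proof. by apply/funext => s; rewrite /filter_error /xhat !Emx_mulmx. Qed.

Lemma filter_error_is_derive (t : R) :
  is_derive t 1 x (A *m x t + y t *: by_ + u t *: bu) ->
  is_derive t 1 thy (A^T *m thy t + y t *: c^T) ->
  is_derive t 1 thu (A^T *m thu t + u t *: c^T) ->
  is_derive t 1 filter_error (A *m filter_error t).
Proof.
move=> x_der thy_der thu_der.
rewrite {1}filter_errorE; apply: is_derive_eq.
  exact: is_deriveB x_der (is_deriveD (is_derive_mulmx (swap_mx ahat by_) thy_der)
                                      (is_derive_mulmx (swap_mx ahat bu) thu_der)).
rewrite filter_errorE !mulmxDr -!scalemxAr !mulmxA !swap_mx_A0 !swap_mx_c0.
rewrite mulmxN mulmxDr !mulmxA.
move: (A *m x t) (A *m swap_mx ahat by_ *m thy t) (A *m swap_mx ahat bu *m thu t).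
move=> X1 X2 X3.
by apply/matrixP => i j; rewrite !mxE; ring.
Qed.

Lemma filter_error_continuous :
  {within `[0, +oo[, continuous x} -> {within `[0, +oo[, continuous thy} ->
  {within `[0, +oo[, continuous thu} -> {within `[0, +oo[, continuous filter_error}.
Proof.
move=> x_cont thy_cont thu_cont s; rewrite filter_errorE.
exact: (continuousB (x_cont s) (continuousD
  (continuous_mulmx (M := swap_mx ahat by_) thy_cont (x := s))
  (continuous_mulmx (M := swap_mx ahat bu) thu_cont (x := s)))).
Qed.

End FilterError.

Section Corners.
Variables (R : realType) (n : nat) (P : 'M[R]_n).
Hypotheses (Psym : P^T = P)
  (Ppos : forall v : 'cV[R]_n, v != 0 -> 0 < (v^T *m P *m v) 0 0).
Variables (ahat thy thu alo ahi blo bhi : 'cV[R]_n).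
Local Notation N := (mxnorm P).
Local Notation corners := (corner_points ahat thy thu alo ahi blo bhi).

Definition corner (lo hi : 'cV[R]_n) (sg : {ffun 'I_n -> bool}) : 'cV[R]_n :=
  \col_i (if sg i then hi i 0 else lo i 0).

Lemma corner_at_endpoint lo hi sg i : at_endpoint lo hi (corner lo hi sg) i.
Proof. by rewrite /at_endpoint mxE; case: (sg i); [right | left]. Qed.

Lemma at_endpoint_corner lo hi z : (forall i, at_endpoint lo hi z i) ->
  z = corner lo hi [ffun i => z i 0 == hi i 0].
Proof.
move=> z_end; apply/matrixP => i j; rewrite ord1 !mxE ffunE.
by case: (z_end i) => ->; [case: eqP | rewrite eqxx].
Qed.

Lemma corner_points_max :
  exists p, corners p /\ forall c, corners c -> N c <= N p.
Proof.
pose cp (sg : {ffun 'I_n -> bool} * {ffun 'I_n -> bool}) :=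
  xhat ahat thy thu (ahat - corner alo ahi sg.1) (corner blo bhi sg.2).
have [sg _ sg_max] :=
  @arg_maxP _ _ _ ([ffun=> false], [ffun=> false]) xpredT (fun sg => N (cp sg)) isT.
exists (cp sg); split.
  exists (corner alo ahi sg.1), (corner blo bhi sg.2).
  by do !split => //; apply: corner_at_endpoint.
move=> _ [a [b [a_end [b_end ->]]]].
rewrite (at_endpoint_corner a_end) (at_endpoint_corner b_end).
exact: (sg_max (_, _)).
Qed.

Lemma xhat_le_corner_point a b : in_box alo ahi a -> in_box blo bhi b ->
  exists2 c, corners c & N (xhat ahat thy thu (ahat - a) b) <= N c.
Proof.
move=> a_box b_box; pose Ey := Emx ahat thy; pose Eu := Emx ahat thu.
have xhatE a' b' :
    xhat ahat thy thu (ahat - a') b' = Ey *m ahat + Eu *m b' + (- Ey) *m a'.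
  by rewrite /xhat -/Ey -/Eu mulmxBr mulNmx addrAC.
have [a' [a'_end le_a']] :=
  mxnorm_box_corner Psym Ppos (Ey *m ahat + Eu *m b) (- Ey) a_box.
have [b' [b'_end le_b']] :=
  mxnorm_box_corner Psym Ppos (Ey *m (ahat - a')) Eu b_box.
exists (xhat ahat thy thu (ahat - a') b'); first by exists a', b'.
by rewrite !xhatE in le_a' *; apply: le_trans le_a' _; rewrite -!xhatE /xhat.
Qed.

Lemma xhat_le_vertex a b : in_box alo ahi a -> in_box blo bhi b ->
  exists p, vertex_of (conv_hull corners) p /\
    N (xhat ahat thy thu (ahat - a) b) <= N p.
Proof.
move=> a_box b_box; have [p [corner_p p_max]] := corner_points_max.
exists p; split; first exact: (vertex_of_mxnorm_max Psym Ppos corner_p p_max).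
have [c corner_c le_c] := xhat_le_corner_point a_box b_box.
exact: le_trans le_c (p_max c corner_c).
Qed.

End Corners.

Theorem theorem1 (R : realType) (n : nat) (hn : (0 < n)%N)
  (a b alo ahi blo bhi ahat : 'cV[R]_n)
  (ha : forall i, alo i 0 <= a i 0 <= ahi i 0)
  (hb : forall j, blo j 0 <= b j 0 <= bhi j 0)
  (hstab : strictly_stable (A0 ahat))
  (x thy thu : R -> 'cV[R]_n) (u y : R -> R)
  (hy : forall t : R, 0 <= t -> y t = (@c0 R n *m x t) 0 0)
  (hx : forall t : R, 0 < t ->
     is_derive t 1 x (A0 ahat *m x t + y t *: (ahat - a) + u t *: b))
  (hthy : forall t : R, 0 < t ->
     is_derive t 1 thy ((A0 ahat)^T *m thy t + y t *: (@c0 R n)^T))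
  (hthu : forall t : R, 0 < t ->
     is_derive t 1 thu ((A0 ahat)^T *m thu t + u t *: (@c0 R n)^T))
  (cx : {within `[0, +oo[, continuous x})
  (cthy : {within `[0, +oo[, continuous thy})
  (cthu : {within `[0, +oo[, continuous thu})
  (Q : 'M[R]_n) (hQ : posdef Q) (alpha : R)
  (hLMI : negsemidef (A0 ahat *m Q + Q *m (A0 ahat)^T + (2 * alpha) *: Q)) :
  let eps0 := x 0 - xhat ahat (thy 0) (thu 0) (ahat - a) b in
  forall t : R, 0 <= t ->
    exists p, vertex_of
        (conv_hull (corner_points ahat (thy t) (thu t) alo ahi blo bhi)) p /\
      qnorm Q (x t) <= qnorm Q p + expR (- alpha * t) * qnorm Q eps0.
Proof.
move=> eps0 t t_ge0.
have qnormE v : qnorm Q v = mxnorm (invmx Q) v by [].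
have [Psym Ppos] := posdef_invmx hQ.
have [p [p_vertex le_xhat_p]] :=
  xhat_le_vertex Psym Ppos ahat (thy t) (thu t) ha hb.
exists p; split => //.
pose err := filter_error ahat (ahat - a) b x thy thu.
have err_decay :
    mxnorm (invmx Q) (err t) <= expR (- alpha * t) * mxnorm (invmx Q) eps0.
  apply: (mxnorm_exp_decay (lyapunov_invmx hQ hLMI)); last exact: t_ge0.
    exact: filter_error_continuous.
  move=> s s_gt0.
  exact: filter_error_is_derive (hx s s_gt0) (hthy s s_gt0) (hthu s s_gt0).
rewrite !qnormE -[x t](subrK (xhat ahat (thy t) (thu t) (ahat - a) b)).
apply: le_trans (mxnormD Psym Ppos _ _) _.
by rewrite addrC; apply: lerD.
Qed.
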